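(* For $n\ge4$ and $0\le k<n$, $$|\mathbf{I}_{n,k}(012)|=|\mathbf{I}_{n-1}(012)|-\sum_{l=1}^{k-1}\sum_{j=0}^{l-1}\sum_{i\ge j}|\mathbf{I}_{n-3,i}(012)|,$$ with initial conditions $|\mathbf{I}_{1,0}(012)|=|\mathbf{I}_{2,0}(012)|=|\mathbf{I}_{2,1}(012)|=|\mathbf{I}_{3,2}(012)|=1$ and $|\mathbf{I}_{3,0}(012)|=|\mathbf{I}_{3,1}(012)|=2$. Equivalently, for $n\ge4$, $$|\mathbf{I}_{n,k}(012)|=|\mathbf{I}_{n-1}(012)|-\sum_{i=0}^{k-3}(i+1)\Big(k-1-\frac i2\Big)|\mathbf{I}_{n-3,i}(012)|-\frac{k(k-1)}{2}\sum_{i=k-2}^{n-4}|\mathbf{I}_{n-3,i}(012)|.$$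
   Context: An inversion sequence of length $n$ is an integer sequence $e=e_1\dots e_n$ with $0\le e_i<i$ for all $i$; $\mathbf{I}_n$ denotes the set of these. $\mathbf{I}_n(012)$ is the set of $e\in\mathbf{I}_n$ with no $i$ such that $e_i<e_{i+1}<e_{i+2}$ (avoiding the consecutive pattern $012$). $\mathbf{I}_{n,k}(012)=\{e\in\mathbf{I}_n(012):e_n=k\}$, empty for $k\ge n$. Empty sums are $0$. *)

From HB Require Import structures.
From mathcomp Require Import all_boot all_order all_algebra.
Set Implicit Arguments. Unset Strict Implicit. Unset Printing Implicit Defensive.

(* A sequence s = e_1 ... e_n (stored 0-indexed: s`_i = e_{i+1}) is an
   inversion sequence iff 0 <= e_i < i, i.e. nth 0 s i <= i (0-indexed). *)
Definition is_inv_seq (s : seq nat) : bool :=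
  all (fun i => nth 0 s i <= i) (iota 0 (size s)).

Definition avoids012 (s : seq nat) : bool :=
  ~~ has (fun i => (nth 0 s i < nth 0 s i.+1) && (nth 0 s i.+1 < nth 0 s i.+2))
         (iota 0 (size s - 2)).

(* I_n(012): every inversion sequence of length n has entries < n, so it is
   represented by an n-tuple of elements of 'I_n (via map val). *)
Definition I012 (n : nat) : {set n.-tuple 'I_n} :=
  [set t : n.-tuple 'I_n | is_inv_seq (map val t) && avoids012 (map val t)].

Definition I012k (n k : nat) : {set n.-tuple 'I_n} :=
  [set t in I012 n | (0 < n) && (nth 0 (map val t) n.-1 == k)].

From HB Require Import structures.
From mathcomp Require Import all_boot all_order all_algebra.
From mathcomp Require Import zify ring.
Import Order.TTheory GRing.Theory Num.Theory.
Set Implicit Arguments. Unset Strict Implicit.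

(* Every e in I_n(012) arises uniquely from a shorter one by
   appending a last entry x <= n-1 that creates no 012 at the end; this gives
   an explicit duplicate-free enumeration [avoiders n] of I_n(012), and every
   cardinality in the statement becomes a count over that list.
   For n = m+3, appending k to some s in I_{m+2}(012) fails exactly when the
   last two entries of s satisfy s_m < s_{m+1} < k.  Counting these bad s by
   peeling off their last entry, and then the one before, shows that their
   number is sum_i w_k(i) |I_{m,i}(012)|, where w_k(t) = sum_{y<=t} (k-1-y)
   depends only on the last entry t of the length-m prefix.  The weight w_k(i)
   is also the number of pairs (l, j) with j <= i, 1 <= l < k, j < l, which
   turns the weighted sum into the triple sum of the recurrence; evaluating
   w_k(i) in closed form gives the second formula. *)

Definition extendable (n : nat) (s : seq nat) (x : nat) : bool :=
  ~~ ((nth 0 s n.-2 < nth 0 s n.-1) && (nth 0 s n.-1 < x)).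

Fixpoint avoiders (n : nat) : seq (seq nat) :=
  match n with
  | 0 => [:: [::]]
  | n'.+1 => [seq rcons s x | s <- avoiders n',
                              x <- [seq x <- iota 0 n'.+1 | extendable n' s x]]
  end.
Arguments avoiders : simpl never.

Lemma is_inv_seq_rcons s x :
  is_inv_seq (rcons s x) = is_inv_seq s && (x <= size s).
Proof.
rewrite /is_inv_seq size_rcons -addn1 iotaD all_cat /= add0n nth_rcons ltnn.
rewrite eqxx andbT; congr andb; apply: eq_in_all => i.
by rewrite mem_iota add0n => /andP[_ lt_i]; rewrite nth_rcons lt_i.
Qed.

Lemma avoids012_rcons s x :
  avoids012 (rcons s x) = avoids012 s && extendable (size s) s x.
Proof.
rewrite /avoids012 /extendable size_rcons.
have [short | long] := ltnP (size s) 2.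
  have -> : (size s).+1 - 2 = 0 by lia.
  have -> : size s - 2 = 0 by lia.
  by case: (size s) short => [|[|]] //= _; rewrite ltnn.
have -> : (size s).+1 - 2 = (size s - 2) + 1 by lia.
rewrite iotaD has_cat /= add0n orbF negb_or; congr andb.
  congr negb; apply: eq_in_has => i; rewrite mem_iota add0n => /andP[_ lt_i].
  rewrite !nth_rcons; have -> : i < size s by lia.
  have -> : i.+1 < size s by lia.
  by have -> : i.+2 < size s by lia.
have -> : size s - 2 = (size s).-2 by lia.
have -> : (size s).-2.+1 = (size s).-1 by lia.
have -> : (size s).-1.+1 = size s by lia.
rewrite !nth_rcons ltnn eqxx.
have -> : (size s).-2 < size s by lia.
by have -> : (size s).-1 < size s by lia.
Qed.

Lemma mem_avoiders n s :
  (s \in avoiders n) = [&& size s == n, is_inv_seq s & avoids012 s].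
Proof.
elim: n s => [|n IH] s; first by case: s.
case/lastP: s => [|s x].
  by apply/negbTE/allpairsPdep => -[[|? ?] [y [_ _]]].
rewrite size_rcons eqSS is_inv_seq_rcons avoids012_rcons.
apply/allpairsPdep/idP => [[s' [y [s'_in y_in /rcons_inj [-> ->]]]] | ].
  move: y_in; rewrite mem_filter mem_iota add0n => /andP[y_ok y_lt].
  move: s'_in; rewrite IH => /and3P[/eqP size_s' -> ->].
  by rewrite size_s' eqxx -ltnS y_lt y_ok.
move=> /and3P[/eqP size_s /andP[inv_s x_le] /andP[avoid_s x_ok]].
exists s, x; split => //; first by rewrite IH size_s eqxx inv_s avoid_s.
by rewrite mem_filter mem_iota add0n -size_s ltnS x_le x_ok.
Qed.

Lemma avoiders_uniq n : uniq (avoiders n).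
Proof.
elim: n => [|n IH] //; apply: allpairs_uniq_dep => //.
  by move=> s _; apply/filter_uniq/iota_uniq.
by move=> [s x] [t y] _ _ /= /rcons_inj [-> ->].
Qed.

Lemma size_avoiders n s : s \in avoiders n -> size s = n.
Proof. by rewrite mem_avoiders => /and3P[/eqP]. Qed.

Lemma nth_avoiders_le n s i : s \in avoiders n -> i < n -> nth 0 s i <= i.
Proof.
rewrite mem_avoiders => /and3P[/eqP size_s inv_s _] lt_i.
by move/allP: inv_s => /(_ i); rewrite mem_iota add0n size_s lt_i => /(_ isT).
Qed.

Lemma inv_seq_tuple n s :
  size s = n -> is_inv_seq s -> exists t : n.-tuple 'I_n, map val t = s.
Proof.
case: n => [|n] size_s inv_s.
  by move/eqP: size_s; rewrite size_eq0 => /eqP ->; exists [tuple].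
have size_map_s : size (map (@inord n) s) == n.+1 by rewrite size_map size_s.
exists (Tuple size_map_s) => /=.
rewrite -map_comp map_id_in // => x /(nthP 0) [i lt_i <-] /=.
apply: inordK; move/allP: inv_s => /(_ i); rewrite mem_iota add0n lt_i.
by move=> /(_ isT) le_i; rewrite -size_s; apply: leq_ltn_trans le_i lt_i.
Qed.

Lemma card_I012_by n (R : pred (seq nat)) :
  #|[set t : n.-tuple 'I_n |
       (is_inv_seq (map val t) && avoids012 (map val t)) && R (map val t)]|
  = count R (avoiders n).
Proof.
rewrite cardE -(size_map (fun t : n.-tuple 'I_n => map val t)) -size_filter.
apply: perm_size; apply: uniq_perm.
- rewrite map_inj_uniq ?enum_uniq // => t1 t2 /(inj_map val_inj); exact: val_inj.
- exact/filter_uniq/avoiders_uniq.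
move=> s; rewrite mem_filter mem_avoiders; apply/mapP/idP.
  case=> t; rewrite mem_enum inE => /andP[/andP[inv_s avoid_s] R_s] ->.
  by rewrite R_s inv_s avoid_s size_map size_tuple eqxx.
move=> /andP[R_s /and3P[/eqP size_s inv_s avoid_s]].
have [t val_t] := inv_seq_tuple size_s inv_s.
by exists t; rewrite // mem_enum inE val_t inv_s avoid_s R_s.
Qed.

Definition ends_with (m i : nat) : nat :=
  count (fun s => (0 < m) && (nth 0 s m.-1 == i)) (avoiders m).

Lemma card_I012k n k : #|I012k n k| = ends_with n k.
Proof. by rewrite /ends_with -card_I012_by; apply: eq_card => t; rewrite !inE andbA. Qed.

Lemma card_I012 n : #|I012 n| = size (avoiders n).
Proof. by rewrite -count_predT -card_I012_by; apply: eq_card => t; rewrite !inE andbT. Qed.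

Lemma ends_with_sum m i : ends_with m i = \sum_(s <- avoiders m) ((0 < m) && (nth 0 s m.-1 == i)).
Proof. by rewrite /ends_with -sumn_count sumnE big_map. Qed.

Lemma sum_avoiders_succ n (F : seq nat -> nat) :
  \sum_(s <- avoiders n.+1) F s
  = \sum_(s <- avoiders n) \sum_(0 <= x < n.+1 | extendable n s x) F (rcons s x).
Proof.
rewrite [avoiders _]/= big_allpairs_dep; apply: eq_bigr => s _.
by rewrite big_filter /index_iota subn0.
Qed.

Definition blocks (m k : nat) (s : seq nat) : bool :=
  (nth 0 s m < nth 0 s m.+1) && (nth 0 s m.+1 < k).

Definition weight (k t : nat) : nat := \sum_(0 <= y < t.+1) (k.-1 - y).

Lemma ends_with_add_blocked m k : k < m.+3 ->
  ends_with m.+3 k + \sum_(s <- avoiders m.+2) blocks m k s = size (avoiders m.+2).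
Proof.
move=> lt_k; rewrite ends_with_sum sum_avoiders_succ -sum1_size -big_split /=.
apply: eq_big_seq => s s_in; have size_s := size_avoiders s_in.
have -> : \sum_(0 <= x < m.+3 | extendable m.+2 s x) (nth 0 (rcons s x) m.+2 == k)
          = extendable m.+2 s k.
  rewrite big_mkcond /index_iota subn0 (bigD1_seq k) ?mem_iota ?iota_uniq //=.
  rewrite nth_rcons size_s ltnn !eqxx big1 ?addn0; first by case: extendable.
  move=> x ne_x; rewrite nth_rcons size_s ltnn eqxx (negbTE ne_x).
  by case: extendable.
by rewrite /extendable /blocks; case: (_ && _).
Qed.

Lemma count_between N a k : \sum_(0 <= x < N) ((a < x) && (x < k)) = minn N k - a.+1.
Proof.
elim: N => [|N IH]; first by rewrite big_geq // min0n.
by rewrite big_nat_recr //= IH; case: (ltnP a N); case: (ltnP N k) => /=; lia.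
Qed.

(* Peeling the last entry x of a blocking sequence: given the prefix with last
   entry y = s_m, the admissible x are y < x < k, and there are k-1-y of them
   when s_{m-1} >= y (otherwise no x > y is admissible). *)
Lemma blocked_by_prefix m k : k < m.+3 ->
  \sum_(s <- avoiders m.+2) blocks m k s
  = \sum_(s <- avoiders m.+1) ((nth 0 s m <= nth 0 s m.-1) * (k.-1 - nth 0 s m)).
Proof.
move=> lt_k; rewrite sum_avoiders_succ; apply: eq_big_seq => s s_in.
have size_s := size_avoiders s_in.
under eq_bigr => x _ do rewrite /blocks !nth_rcons size_s ltnSn ltnn eqxx.
rewrite /extendable; have [y_le | _] /= := leqP (nth 0 s m) (nth 0 s m.-1).
  by rewrite mul1n count_between; lia.
by rewrite mul0n big1 // => x /negbTE ->.
Qed.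

(* Peeling the entry y = s_m as well: for a prefix with last entry t, the
   admissible y <= t (all of them avoid 012) contribute k-1-y each. *)
Lemma blocked_by_weight m k : 0 < m ->
  \sum_(s <- avoiders m.+1) ((nth 0 s m <= nth 0 s m.-1) * (k.-1 - nth 0 s m))
  = \sum_(s <- avoiders m) weight k (nth 0 s m.-1).
Proof.
move=> m_gt0; rewrite sum_avoiders_succ; apply: eq_big_seq => s s_in.
have size_s := size_avoiders s_in.
have lt_pred : m.-1 < m by lia.
have t_le : nth 0 s m.-1 <= m.-1 by apply: nth_avoiders_le s_in lt_pred.
set t := nth 0 s m.-1 in t_le *.
under eq_bigr => y _ do rewrite !nth_rcons size_s ltnn eqxx lt_pred -/t.
rewrite big_mkcond /=.
rewrite (eq_bigr (fun y => (y <= t) * (k.-1 - y))); last first.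
  move=> y _; case: (leqP y t) => [y_le | _]; last by case: extendable.
  by rewrite /extendable -/t (ltnNge t y) y_le andbF.
rewrite (@big_cat_nat _ _ _ t.+1) //= ?[X in _ + X]big1_seq ?addn0; last 2 first.
- move=> y /andP[_]; rewrite mem_index_iota => /andP[t_lt _].
  by rewrite leqNgt t_lt.
- lia.
by apply: eq_big_nat => y /andP[_ y_lt]; rewrite -ltnS y_lt mul1n.
Qed.

Lemma weight_by_last m k : 0 < m ->
  \sum_(s <- avoiders m) weight k (nth 0 s m.-1)
  = \sum_(0 <= i < m) weight k i * ends_with m i.
Proof.
move=> m_gt0; under [RHS]eq_bigr => i _ do rewrite ends_with_sum big_distrr.
rewrite exchange_big; apply: eq_big_seq => s s_in /=.
have t_le : nth 0 s m.-1 <= m.-1 by apply: nth_avoiders_le s_in _; lia.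
rewrite (bigD1_seq (nth 0 s m.-1)) ?mem_index_iota ?iota_uniq //=; last by lia.
rewrite m_gt0 eqxx muln1 big1 ?addn0 // => i /negbTE ne_i.
by rewrite eq_sym ne_i muln0.
Qed.

Lemma sum_nat_from j m (a : nat -> nat) :
  \sum_(j <= i < m) a i = \sum_(0 <= i < m) (j <= i) * a i.
Proof.
rewrite (@big_nat_widenl _ _ _ j 0) // big_mkcond.
by apply: eq_bigr => i _; case: (j <= i); rewrite ?mul1n.
Qed.

Lemma count_below N k : \sum_(0 <= y < N) (y < k) = minn N k.
Proof.
elim: N => [|N IH]; first by rewrite big_geq // min0n.
by rewrite big_nat_recr //= IH; case: (ltnP N k) => /=; lia.
Qed.

Lemma weight_pairs k i : \sum_(1 <= l < k) \sum_(0 <= j < l) (j <= i) = weight k i.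
Proof.
elim: k => [|[|k] IH]; try by rewrite big_geq // /weight big1.
rewrite big_nat_recr //= IH /weight (count_below k.+1 i.+1) minnC.
rewrite -count_below -big_split /=; apply: eq_bigr => y _.
by case: (ltnP y k.+1) => /=; lia.
Qed.

Lemma triple_sum_weight k m (a : nat -> nat) :
  \sum_(1 <= l < k) \sum_(0 <= j < l) \sum_(j <= i < m) a i
  = \sum_(0 <= i < m) weight k i * a i.
Proof.
under eq_bigr => l _ do under eq_bigr => j _ do rewrite sum_nat_from.
under eq_bigr => l _ do rewrite exchange_big.
rewrite exchange_big; apply: eq_bigr => i _.
rewrite -weight_pairs big_distrl /=; apply: eq_bigr => l _.
by rewrite big_distrl.
Qed.

Lemma recurrence_card n k : 4 <= n -> k < n ->
  #|I012k n k| + \sum_(1 <= l < k) \sum_(0 <= j < l) \sum_(j <= i < n - 3) #|I012k (n - 3) i|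
  = #|I012 n.-1|.
Proof.
case: n => [|[|[|m]]] // n_ge4 lt_k; have m_gt0 : 0 < m by lia.
have -> : m.+3 - 3 = m by lia.
rewrite triple_sum_weight card_I012k card_I012.
under eq_bigr => i _ do rewrite card_I012k.
rewrite -weight_by_last // -blocked_by_weight // -blocked_by_prefix //.
exact: ends_with_add_blocked.
Qed.

(* Closed forms of the weight: below saturation all k-1-y are exact ... *)
Lemma weight_unsaturated k i : i < k -> 2 * weight k i = i.+1 * (2 * k - 2 - i).
Proof.
elim: i => [|i IH] lt_i; first by rewrite /weight big_nat1; lia.
rewrite /weight big_nat_recr //= -/(weight k i) mulnDr IH; last by lia.
have [d ->] : exists d, k = i.+2 + d by exists (k - i.+2); lia.
have -> : 2 * (i.+2 + d) - 2 - i = i.+2 + 2 * d by lia.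
have -> : (i.+2 + d).-1 - i.+1 = d by lia.
have -> : 2 * (i.+2 + d) - 2 - i.+1 = i.+1 + 2 * d by lia.
nia.
Qed.

(* ... and from t = k-2 on, w_k(t) = 1 + 2 + ... + (k-1) stays constant. *)
Lemma weight_saturated k i : k <= i.+2 -> 2 * weight k i = k * (k - 1).
Proof.
elim: i => [|i IH] le_k.
  by rewrite /weight big_nat1; case: k le_k => [|[|[|]]].
have [le_k' | gt_k] := leqP k i.+2.
  by rewrite /weight big_nat_recr //= -/(weight k i) mulnDr IH //; lia.
have -> : k = i.+3 by lia.
rewrite weight_unsaturated //.
have -> : 2 * i.+3 - 2 - i.+1 = i.+3 by lia.
have -> : i.+3 - 1 = i.+2 by lia.
nia.
Qed.

Local Open Scope ring_scope.

Lemma weighted_sum_closed k m (a : nat -> nat) : (k - 2 <= m)%N ->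
  \sum_(0 <= i < k - 2) (i.+1)%:R * (k%:R - 1 - i%:R / 2) * (a i)%:R
  + (k * (k - 1))%:R / 2 * \sum_(k - 2 <= i < m) (a i)%:R
  = ((\sum_(0 <= i < m) weight k i * a i)%:R : rat).
Proof.
move=> le_m; rewrite natr_sum [RHS](@big_cat_nat _ _ _ (k - 2)) //= mulr_sumr.
congr (_ + _); apply: eq_big_nat => i /andP[le_i lt_i]; rewrite [RHS]natrM; congr (_ * _).
  have /(congr1 (fun n : nat => n%:R : rat)) : (2 * weight k i = i.+1 * (2 * k - 2 - i))%N.
    by apply: weight_unsaturated; lia.
  rewrite !natrM natrB /=; last by lia.
  rewrite natrB /= ?natrM; last by lia.
  by move=> double_w; apply: (@mulfI _ 2) => //; rewrite double_w; field.
have /(congr1 (fun n : nat => n%:R : rat)) : (2 * weight k i = k * (k - 1))%N.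
  by apply: weight_saturated; lia.
by rewrite !natrM /= => double_w; apply: (@mulfI _ 2) => //; rewrite double_w; field.
Qed.

Lemma recurrence n k : (4 <= n)%N -> (k < n)%N ->
  (#|I012k n k|%:R : rat) =
    (#|I012 n.-1|)%:R
    - \sum_(1 <= l < k) \sum_(0 <= j < l) \sum_(j <= i < n - 3) (#|I012k (n - 3) i|)%:R.
Proof.
move=> n_ge4 lt_k; rewrite -(recurrence_card n_ge4 lt_k) natrD natr_sum.
under eq_bigr => l _ do rewrite natr_sum.
under eq_bigr => l _ do under eq_bigr => j _ do rewrite natr_sum.
by rewrite addrK.
Qed.

Lemma initial_values :
  (#|I012k 1 0| = 1 /\ #|I012k 2 0| = 1 /\ #|I012k 2 1| = 1
   /\ #|I012k 3 2| = 1 /\ #|I012k 3 0| = 2 /\ #|I012k 3 1| = 2)%N.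
Proof. by rewrite !card_I012k; vm_compute; repeat split. Qed.

Lemma closed_form n k : (4 <= n)%N -> (k < n)%N ->
  (#|I012k n k|%:R : rat) =
    (#|I012 n.-1|)%:R
    - \sum_(0 <= i < k - 2) (i.+1)%:R * (k%:R - 1 - i%:R / 2) * (#|I012k (n - 3) i|)%:R
    - (k * (k - 1))%:R / 2 * \sum_(k - 2 <= i < n - 3) (#|I012k (n - 3) i|)%:R.
Proof.
move=> n_ge4 lt_k; rewrite -(recurrence_card n_ge4 lt_k) triple_sum_weight natrD.
rewrite -(@weighted_sum_closed k (n - 3) (fun i => #|I012k (n - 3) i|)); last by lia.
by ring.
Qed.

Theorem mainTheorem14 :
  (* the recurrence, n >= 4, 0 <= k < n *)
  (forall n k : nat, (4 <= n)%N -> (k < n)%N ->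
     (#|I012k n k|%:R : rat) =
       (#|I012 n.-1|)%:R
       - \sum_(1 <= l < k) \sum_(0 <= j < l) \sum_(j <= i < n - 3)
            (#|I012k (n - 3) i|)%:R)
  (* initial conditions *)
  /\ (#|I012k 1 0| = 1 /\ #|I012k 2 0| = 1 /\ #|I012k 2 1| = 1
      /\ #|I012k 3 2| = 1 /\ #|I012k 3 0| = 2 /\ #|I012k 3 1| = 2)%N
  (* the equivalent closed form *)
  /\ (forall n k : nat, (4 <= n)%N -> (k < n)%N ->
     (#|I012k n k|%:R : rat) =
       (#|I012 n.-1|)%:R
       - \sum_(0 <= i < k - 2) (i.+1)%:R * (k%:R - 1 - i%:R / 2)
            * (#|I012k (n - 3) i|)%:R
       - (k * (k - 1))%:R / 2 * \sum_(k - 2 <= i < n - 3) (#|I012k (n - 3) i|)%:R).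
Proof. by split; [exact: recurrence | split; [exact: initial_values | exact: closed_form]]. Qed.
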